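(* Let $Z_\bullet$ be a semi-simplicial space and $Y_\bullet$ a semi-simplicial subspace which is full relative to $Z_\bullet$. If each inclusion $Y_n\hookrightarrow Z_n$ is a closed inclusion, then the induced map of geometric realisations $\|Y_\bullet\|\to\|Z_\bullet\|$ is a closed inclusion. The same holds with ''closed inclusion'' replaced by ''open inclusion''.
   Context: The geometric realisation $\|Z_\bullet\|$ is $\bigsqcup_{n\geq0}\Delta^n\times Z_n$ modulo the face relations, and $\|Z_\bullet\|^{(n)}$ denotes its $n$-skeleton (image of simplices of dimension $\leq n$). A semi-simplicial subspace $Y_\bullet\subseteq Z_\bullet$ (subspaces $Y_n\subseteq Z_n$ closed under the face maps) is full relative to $Z_\bullet$ if for each $n$ the square with maps $\Delta^n\times Y_n\to\Delta^n\times Z_n$, $\Delta^n\times Y_n\to\|Y_\bullet\|^{(n)}$, $\Delta^n\times Z_n\to\|Z_\bullet\|^{(n)}$, $\|Y_\bullet\|^{(n)}\to\|Z_\bullet\|^{(n)}$ is Cartesian in the category of sets; equivalently, a simplex $\sigma\in Z_n$ lies in $Y_n$ whenever at least one of its vertices lies in $Y_0$. *)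

From HB Require Import structures.
From mathcomp Require Import all_boot all_order all_algebra.
From mathcomp Require Import all_classical all_reals all_analysis.
From Stdlib Require Import Relations.
Set Implicit Arguments. Unset Strict Implicit. Unset Printing Implicit Defensive.
Import Order.TTheory GRing.Theory Num.Theory.
Local Open Scope classical_set_scope.
Local Open Scope ring_scope.

(* Face indices are natural numbers; indices i > n+1 are junk
   and never used. *)
Record ssspace := SSSpace {
  ss_ob :> nat -> topologicalType;
  ss_face : forall n : nat, nat -> ss_ob n.+1 -> ss_ob n;
  ss_face_cont : forall n i, (i <= n.+1)%N -> continuous (@ss_face n i);
  ss_face_comp : forall n i j (z : ss_ob n.+2), (i < j)%N -> (j <= n.+2)%N ->
      @ss_face n i (@ss_face n.+1 j z) = @ss_face n j.-1 (@ss_face n.+1 i z)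
}.

Definition ss_map (Y Z : ssspace) (f : forall n, Y n -> Z n) : Prop :=
  forall n i (y : Y n.+1), (i <= n.+1)%N ->
    f n (@ss_face Y n i y) = @ss_face Z n i (f n.+1 y).

Section Realisation.
Variable R : realType.

Definition in_simplex n (t : 'rV[R]_n.+1) : Prop :=
  (forall k, 0 <= t 0 k) /\ \sum_k t 0 k = 1.

(* coface delta^i : Delta^n -> Delta^{n+1}, inserting a 0 at coordinate i. *)
Definition coface n (i : nat) (t : 'rV[R]_n.+1) : 'rV[R]_n.+2 :=
  \row_(k < n.+2) (if (k < i)%N then t 0 (inord k)
                   else if (k == i :> nat) then 0 else t 0 (inord k.-1)).

(* Points of  \coprod_n  R^{n+1} x Z_n  (only simplex points are used). *)
Definition Pt (Z : ssspace) := {n : nat & ('rV[R]_n.+1 * Z n)%type}.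

Definition inDelta (Z : ssspace) (p : Pt Z) : Prop := in_simplex (projT2 p).1.

Definition face_step (Z : ssspace) (p q : Pt Z) : Prop :=
  exists n i (t : 'rV[R]_n.+1) (z : Z n.+1),
    [/\ (i <= n.+1)%N, in_simplex t,
        p = existT _ n.+1 (coface i t, z) &
        q = existT _ n (t, @ss_face Z n i z)].

Definition eqclass (Z : ssspace) (p : Pt Z) : set (Pt Z) :=
  [set q | clos_refl_sym_trans _ (@face_step Z) p q].

(* Geometric realisation ||Z||, as the set of equivalence classes of
   points of  \coprod_n Delta^n x Z_n. *)
Definition real (Z : ssspace) :=
  {A : set (Pt Z) | exists p, inDelta p /\ A = eqclass p}.

Definition at_pt (Z : ssspace) (a : real Z) (p : Pt Z) : Prop :=
  proj1_sig a = eqclass p.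

(* Quotient topology of the disjoint union of the Delta^n x Z_n
   (Delta^n with the subspace topology of R^{n+1}): U is open iff for each
   n its preimage in Delta^n x Z_n is relatively open. *)
Definition real_open (Z : ssspace) (U : set (real Z)) : Prop :=
  forall n, exists V : set ('rV[R^o]_n.+1 * Z n)%type, open V /\
    forall (t : 'rV[R]_n.+1) (z : Z n), in_simplex t ->
      ((exists2 a, U a & at_pt a (existT _ n (t, z))) <-> V (t, z)).

Definition skel (Z : ssspace) (n : nat) : set (real Z) :=
  [set a | exists p : Pt Z, [/\ (projT1 p <= n)%N, inDelta p & at_pt a p]].

Definition pt_map (Y Z : ssspace) (f : forall n, Y n -> Z n) (p : Pt Y) : Pt Z :=
  existT _ (projT1 p) ((projT2 p).1, f _ (projT2 p).2).

Definition real_map (Y Z : ssspace) (f : forall n, Y n -> Z n)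
  (a : real Y) : real Z :=
  let p := proj1_sig (cid (proj2_sig a)) in
  exist _ (eqclass (pt_map f p))
    (ex_intro _ (pt_map f p) (conj (proj1 (proj2_sig (cid (proj2_sig a)))) erefl)).

(* Y full relative to Z (via f): for each n the square
     Delta^n x Y_n  -->  Delta^n x Z_n
         |                    |
     ||Y||^(n)      -->  ||Z||^(n)
   is Cartesian in sets, i.e. the comparison map from Delta^n x Y_n to the
   pullback is injective (i) and surjective (ii). *)
Definition full (Y Z : ssspace) (f : forall n, Y n -> Z n) : Prop :=
  forall n : nat,
  (forall (t t' : 'rV[R]_n.+1) (y y' : Y n), in_simplex t -> in_simplex t' ->
     (t, f n y) = (t', f n y') ->
     eqclass (existT _ n (t, y)) = eqclass (existT _ n (t', y')) ->
     (t, y) = (t', y')) /\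
  (forall (t : 'rV[R]_n.+1) (z : Z n) (a : real Y), in_simplex t ->
     skel n a -> at_pt (real_map f a) (existT _ n (t, z)) ->
     exists y : Y n, f n y = z /\ at_pt a (existT _ n (t, y))).

End Realisation.

(* Closed / open inclusions, for spaces given by their predicate of open
   sets: f is a homeomorphism onto its image, and the image is closed
   (resp. open). *)
Definition embedding_by (X Y : Type) (openX : set X -> Prop)
  (openY : set Y -> Prop) (f : X -> Y) : Prop :=
  [/\ injective f,
      (forall V, openY V -> openX (f @^-1` V)) &
      (forall U, openX U -> exists2 V, openY V & U = f @^-1` V)].

Definition closed_incl_by (X Y : Type) (openX : set X -> Prop)
  (openY : set Y -> Prop) (f : X -> Y) : Prop :=
  embedding_by openX openY f /\ openY (~` range f).

Definition open_incl_by (X Y : Type) (openX : set X -> Prop)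
  (openY : set Y -> Prop) (f : X -> Y) : Prop :=
  embedding_by openX openY f /\ openY (range f).

Definition closed_incl (X Y : topologicalType) (f : X -> Y) :=
  closed_incl_by (@open X) (@open Y) f.
Definition open_incl (X Y : topologicalType) (f : X -> Y) :=
  open_incl_by (@open X) (@open Y) f.

From HB Require Import structures.
From mathcomp Require Import all_boot all_order all_algebra.
From mathcomp Require Import all_classical all_reals all_analysis.
From Stdlib Require Import Relations.
Set Implicit Arguments. Unset Strict Implicit. Unset Printing Implicit Defensive.
Import GRing.Theory.
Local Open Scope classical_set_scope.
Local Open Scope ring_scope.

(* By fullness the realisation map is injective (compare two classes in the
   larger of their two dimensions) and its image is saturated: the class of
   (t, z) in Delta^n x Z_n lies in the image iff z lies in Y_n, since this
   property is invariant under the face relation.  An open U of ||Y|| is cut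
   out of each Delta^n x Y_n by an open set, which extends along the embedding
   Delta^n x Y_n -> Delta^n x Z_n to an open W of Delta^n x Z_n.  Hence the
   image of U is cut out of Delta^n x Z_n by W /\ (Delta^n x Y_n): this is
   open when Y_n is open in Z_n, and when Y_n is closed its union with the
   complement Delta^n x (Z_n - Y_n) is an open set that still restricts
   to U. *)

Lemma open_box_nbhs (X A : topologicalType) (U : set (X * A)) x a :
  open U -> U (x, a) ->
  exists P Q, [/\ open P, open Q, P x, Q a & P `*` Q `<=` U].
Proof.
rewrite openE => oU /oU [[P' Q'] [/= Px Qa] sPQ].
move: Px Qa; rewrite !nbhsE => -[P [oP Px] sP] [Q [oQ Qa] sQ].
by exists P, Q; split => // -[y b] [/= /sP Py /sQ Qb]; exact: sPQ.
Qed.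

Lemma open_of_boxes (X A : topologicalType) (U : set (X * A)) :
  (forall p, U p -> exists P Q, [/\ open P, open Q, P p.1, Q p.2 & P `*` Q `<=` U]) ->
  open U.
Proof.
move=> boxes; rewrite openE => p /boxes [P [Q [oP oQ Pp Qp sPQ]]].
by exists (P, Q) => //; split; exact: open_nbhs_nbhs.
Qed.

Lemma open_snd_preimage (X A : topologicalType) (C : set A) :
  open C -> open (snd @^-1` C : set (X * A)).
Proof.
have snd_cont : continuous (@snd X A) by move=> p; apply: cvg_snd.
by move=> oC; exact: (continuousP _).1 snd_cont _ oC.
Qed.

Lemma continuous_idX (X A B : topologicalType) (g : A -> B) :
  continuous g -> continuous (fun p : X * A => (p.1, g p.2)).
Proof.
move=> gc p; apply: cvg_pair; first exact: cvg_fst.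
by apply: cvg_comp; [exact: cvg_snd|exact: gc].
Qed.

Lemma open_idX_extension (X A B : topologicalType) (g : A -> B) (U : set (X * A)) :
  embedding_by open open g -> open U ->
  exists2 W : set (X * B), open W & forall x a, W (x, g a) <-> U (x, a).
Proof.
case=> _ _ gemb oU.
exists [set p | exists P Q,
    [/\ open P, open Q, P p.1, Q p.2 & P `*` (g @^-1` Q) `<=` U]].
  apply: open_of_boxes => p [P [Q [oP oQ Pp Qp sPQ]]].
  by exists P, Q; split => // -[y b] [/= Py Qb]; exists P, Q.
move=> x a; split=> [[P [Q [_ _ Px Qga sPQ]]]|Uxa]; first exact: sPQ.
have [P [Q' [oP oQ' Px Q'a sPQ']]] := open_box_nbhs oU Uxa.
have [Q oQ eQ] := gemb _ oQ'.
by rewrite eQ in Q'a sPQ'; exists P, Q.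
Qed.

Lemma coface_in_simplex (R : realType) n i (t : 'rV[R]_n.+1) :
  (i <= n.+1)%N -> in_simplex t -> in_simplex (coface i t).
Proof.
move=> hi [t_ge0 t_sum1]; split.
  by move=> k; rewrite mxE; case: ifP => _ //; case: ifP.
rewrite (bigD1_ord (inord i : 'I_n.+2)) //= mxE inordK // ltnn eqxx add0r.
rewrite -t_sum1; apply: eq_bigr => k _; rewrite mxE /= inordK // /bump.
have [ik|ki] := leqP i k.
  rewrite add1n ifF; last by rewrite ltnNge ltnW.
  rewrite ifF; last by apply/negbTE; rewrite neq_ltn ltnS ik orbT.
  by congr (t 0 _); apply: val_inj; rewrite /= inordK // ltnS.
by rewrite add0n ki; congr (t 0 _); apply: val_inj; rewrite /= inordK.
Qed.

Section Cells.
Variables (R : realType) (Z : ssspace).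

Definition face_equiv : relation (Pt R Z) := clos_refl_sym_trans _ (@face_step R Z).

Lemma eqclassP (p q : Pt R Z) : eqclass p = eqclass q <-> face_equiv p q.
Proof.
split=> [epq|pq].
  have qq : eqclass q q by exact: rst_refl.
  by rewrite -epq in qq.
apply/funext => r; apply/propext; split; first by apply: rst_trans; apply: rst_sym.
exact: rst_trans.
Qed.

Definition cell n (t : 'rV[R]_n.+1) (ht : in_simplex t) (z : Z n) : real R Z :=
  exist _ (eqclass (existT _ n (t, z))) (ex_intro _ (existT _ n (t, z)) (conj ht erefl)).

Lemma at_pt_cell (a : real R Z) n t (ht : in_simplex t) (z : Z n) :
  at_pt a (existT _ n (t, z)) -> a = cell ht z.
Proof. by case: a => A hA eA; apply: eq_exist. Qed.

Lemma real_cellP (a : real R Z) :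
  exists n t (ht : in_simplex t) (z : Z n), a = cell ht z.
Proof.
have [[n [t z]] [ht az]] := proj2_sig a.
by exists n, t, ht, z; apply: at_pt_cell.
Qed.

Lemma skel_cell m n t (ht : in_simplex t) (z : Z n) : (n <= m)%N -> skel m (cell ht z).
Proof. by move=> nm; exists (existT _ n (t, z)). Qed.

Lemma real_open_cellsP (U : set (real R Z)) :
  real_open U <-> forall n, exists2 V : set ('rV[R^o]_n.+1 * Z n), open V &
    forall t (ht : in_simplex t) z, U (cell ht z) <-> V (t, z).
Proof.
have cellU n t (ht : in_simplex t) (z : Z n) :
    (exists2 a, U a & at_pt a (existT _ n (t, z))) <-> U (cell ht z).
  by split=> [[a Ua /(at_pt_cell ht) <-]|Uc] //; exists (cell ht z).
split=> oU n; have [V] := oU n.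
  by move=> [oV UV]; exists V => // t ht z; rewrite -(cellU _ _ ht) UV.
by move=> oV UV; exists V; split => // t z ht; rewrite (cellU _ _ ht) UV.
Qed.

Lemma real_open_snd (C : forall n, set (Z n)) (U : set (real R Z)) :
  (forall n, open (C n)) ->
  (forall n t (ht : in_simplex t) z, U (cell ht z) <-> C n z) -> real_open U.
Proof.
move=> oC UC; apply/real_open_cellsP => n.
by exists (snd @^-1` C n); [exact: open_snd_preimage | exact: UC].
Qed.

End Cells.

Section RealMap.
Variables (R : realType) (Y Z : ssspace).
Unset Implicit Arguments.
Variable f : forall n, Y n -> Z n.
Set Implicit Arguments.
Hypotheses (f_ss : ss_map f) (f_full : full R f).

Lemma pt_map_face_equiv (p q : Pt R Y) :
  face_equiv p q -> face_equiv (pt_map f p) (pt_map f q).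
Proof.
elim=> {p q} [p q [n [i [t [z [hi ht -> ->]]]]]|p|p q _ qp|p q r _ pq _ qr].
- by apply: rst_step; exists n, i, t, (f n.+1 z); split; rewrite // /pt_map /= f_ss.
- exact: rst_refl.
- exact: rst_sym.
- exact: rst_trans qr.
Qed.

Lemma real_map_at (a : real R Y) p : at_pt a p -> at_pt (real_map f a) (pt_map f p).
Proof.
rewrite /at_pt /real_map /=; case: (cid _) => p0 [_ ap0] ap /=.
by apply/eqclassP/pt_map_face_equiv/eqclassP; rewrite -ap0 -ap.
Qed.

Lemma real_map_cell n (t : 'rV[R]_n.+1) (ht : in_simplex t) (y : Y n) :
  real_map f (cell ht y) = cell ht (f n y).
Proof. exact/at_pt_cell/(@real_map_at (cell ht y) (existT _ n (t, y))). Qed.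

Definition pt_in_range (p : Pt R Z) : Prop := range (f (projT1 p)) (projT2 p).2.

Lemma face_step_in_range p q : face_step p q -> pt_in_range p <-> pt_in_range q.
Proof.
move=> [n [i [t [z [hi ht -> ->]]]]]; rewrite /pt_in_range /=.
split=> [[y _ <-]|[y _ fy]]; first by exists (ss_face i y) => //; rewrite f_ss.
have ht' := coface_in_simplex hi ht.
(* The class of (t, y) lies in the n-skeleton and maps to the class of
   (coface i t, z), so fullness in dimension n+1 lifts z to Y. *)
have [|y' [fy' _]] := (f_full n.+1).2 _ z (cell ht y) ht' (skel_cell _ _ (leqnSn n)).
  rewrite /at_pt real_map_cell /=; apply/eqclassP/rst_sym/rst_step.
  by exists n, i, t, z; split; rewrite // fy.
by exists y'.
Qed.

Lemma face_equiv_in_range p q : face_equiv p q -> pt_in_range p <-> pt_in_range q.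
Proof.
elim=> {p q} [p q /face_step_in_range //|p //|p q _ pq|p q r _ pq _ qr].
- exact: iff_sym.
- exact: iff_trans qr.
Qed.

Lemma range_real_map_cell n (t : 'rV[R]_n.+1) (ht : in_simplex t) (z : Z n) :
  range (real_map f) (cell ht z) <-> range (f n) z.
Proof.
split=> [[a _ az]|[y _ <-]]; last by exists (cell ht y); rewrite ?real_map_cell.
have [m [s [hs [y ea]]]] := real_cellP a; rewrite {a}ea in az.
have := @real_map_at (cell hs y) (existT _ m (s, y)) erefl.
rewrite az => /eqclassP /face_equiv_in_range [_]; apply.
by exists y.
Qed.

Hypothesis f_emb : forall n, embedding_by open open (f n).

Lemma real_map_cell_inj_le n m (le_nm : (n <= m)%N)
    (t : 'rV[R]_n.+1) (ht : in_simplex t) (y : Y n)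
    (s : 'rV[R]_m.+1) (hs : in_simplex s) (y' : Y m) :
  real_map f (cell ht y) = real_map f (cell hs y') -> cell ht y = cell hs y'.
Proof.
rewrite [RHS]real_map_cell => e.
have f_inj : injective (f m) by case: (f_emb m).
have [|y'' [/f_inj -> ay]] :=
  (f_full m).2 s (f m y') (cell ht y) hs (skel_cell _ _ le_nm).
  by rewrite e.
exact: at_pt_cell.
Qed.

Lemma real_map_inj : injective (@real_map R Y Z f).
Proof.
move=> a a'; have [n [t [ht [y ->]]]] := real_cellP a.
have [m [s [hs [y' ->]]]] := real_cellP a'.
have [nm|/ltnW mn] := leqP n m; first exact: real_map_cell_inj_le.
by move=> /esym /(real_map_cell_inj_le mn) ->.
Qed.

Lemma real_map_preimage_image (U : set (real R Y)) :
  real_map f @^-1` (real_map f @` U) = U.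
Proof. by apply/funext => a; exact: (image_inj real_map_inj). Qed.

Lemma real_open_preimage (V : set (real R Z)) :
  real_open V -> real_open (real_map f @^-1` V).
Proof.
move=> /real_open_cellsP oV; apply/real_open_cellsP => n.
have [W oW VW] := oV n.
have f_cont : continuous (f n) by apply/continuousP; case: (f_emb n).
exists ((fun p => (p.1, f n p.2)) @^-1` W).
  exact: (continuousP _).1 (continuous_idX f_cont) _ oW.
by move=> t ht y; rewrite /= real_map_cell VW.
Qed.

Lemma real_map_image_cells (U : set (real R Y)) n : real_open U ->
  exists2 W : set ('rV[R^o]_n.+1 * Z n), open W &
    forall t (ht : in_simplex t) z,
      (real_map f @` U) (cell ht z) <-> range (f n) z /\ W (t, z).
Proof.
move=> /real_open_cellsP /(_ n) [V oV UV].
have [W oW WV] := open_idX_extension (f_emb n) oV.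
exists W => // t ht z; have [[y _ <-]|nz] := pselect (range (f n) z).
  rewrite -real_map_cell image_inj; last exact: real_map_inj.
  by rewrite UV -WV; split=> [|[]//]; split=> //; exists y.
split=> [[a _ az]|[]//]; exfalso; apply/nz/(range_real_map_cell ht).
by exists a.
Qed.

Lemma real_map_open_incl : (forall n, open (range (f n))) ->
  open_incl_by (@real_open R Y) (@real_open R Z) (real_map f).
Proof.
move=> oY; split; last exact: real_open_snd oY range_real_map_cell.
split; [exact: real_map_inj | exact: real_open_preimage |].
move=> U oU; exists (real_map f @` U); last by rewrite real_map_preimage_image.
apply/real_open_cellsP => n; have [W oW UW] := real_map_image_cells n oU.
exists (W `&` snd @^-1` range (f n)).
  by apply: openI => //; apply: open_snd_preimage.
by move=> t ht z; rewrite UW; split=> -[].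
Qed.

Lemma real_map_closed_incl : (forall n, open (~` range (f n))) ->
  closed_incl_by (@real_open R Y) (@real_open R Z) (real_map f).
Proof.
move=> oC; split; last first.
  apply: real_open_snd oC _ => n t ht z.
  exact: not_iff_compat (range_real_map_cell ht z).
split; [exact: real_map_inj | exact: real_open_preimage |].
move=> U oU; exists (real_map f @` U `|` ~` range (real_map f)); last first.
  rewrite preimage_setU -preimage_setC preimage_range setCT setU0.
  by rewrite real_map_preimage_image.
apply/real_open_cellsP => n; have [W oW UW] := real_map_image_cells n oU.
exists (W `|` snd @^-1` ~` range (f n)).
  by apply: openU => //; apply: open_snd_preimage.
move=> t ht z; have := UW t ht z; have := range_real_map_cell ht z.
by case: (pselect (range (f n) z)) => /=; tauto.
Qed.

End RealMap.

Theorem lemma6p5 (R : realType) (Y Z : ssspace) (f : forall n, Y n -> Z n) :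
  ss_map f ->
  (forall n, embedding_by (@open (Y n)) (@open (Z n)) (f n)) ->
  full R f ->
  ((forall n, closed_incl (f n)) ->
     closed_incl_by (@real_open R Y) (@real_open R Z) (real_map f)) /\
  ((forall n, open_incl (f n)) ->
     open_incl_by (@real_open R Y) (@real_open R Z) (real_map f)).
Proof.
move=> f_ss f_emb f_full; split=> f_incl.
  by apply: real_map_closed_incl => // n; case: (f_incl n).
by apply: real_map_open_incl => // n; case: (f_incl n).
Qed.
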